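(* Let $P$ be a finite set of points in the plane in general position (no three collinear) with $|P|$ even, and let $M$ be a pairwise crossing perfect matching on $P$. Then $M$ is a maximum-length perfect matching on $P$, i.e., $w(M)\geqslant w(M')$ for every perfect matching $M'$ on $P$.
   Context: A perfect matching on $P$ is a partition of $P$ into pairs, each pair $\{a,b\}$ regarded as the straight-line segment $ab$. A perfect matching is pairwise crossing if every two of its segments cross each other. For a set $E$ of segments, $w(E)$ is the sum of the Euclidean lengths of its segments. *)

From Stdlib Require Import Reals List Permutation.
Open Scope R_scope.

Definition point := (R * R)%type.

Definition orient (a b c : point) : R :=
  (fst b - fst a) * (snd c - snd a) - (snd b - snd a) * (fst c - fst a).

Definition collinear (a b c : point) : Prop := orient a b c = 0.

Definition general_position (P : list point) : Prop :=
  forall a b c, In a P -> In b P -> In c P ->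
    a <> b -> a <> c -> b <> c -> ~ collinear a b c.

Fixpoint endpoints (M : list (point * point)) : list point :=
  match M with
  | nil => nil
  | (a, b) :: M' => a :: b :: endpoints M'
  end.

(* M is a perfect matching on P: a partition of P into pairs, i.e. the
   list of endpoints of the pairs of M is a rearrangement of P (P has
   no duplicates). *)
Definition perfect_matching (P : list point) (M : list (point * point)) : Prop :=
  Permutation (endpoints M) P.

Definition on_segment (p a b : point) : Prop :=
  exists t, 0 <= t <= 1 /\
    p = ((1 - t) * fst a + t * fst b, (1 - t) * snd a + t * snd b).

Definition segments_cross (s1 s2 : point * point) : Prop :=
  exists p, on_segment p (fst s1) (snd s1) /\ on_segment p (fst s2) (snd s2).

Definition pairwise_crossing (M : list (point * point)) : Prop :=
  forall i j, (i < length M)%nat -> (j < length M)%nat -> i <> j ->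
    segments_cross (nth i M ((0,0),(0,0))) (nth j M ((0,0),(0,0))).

Definition dist (a b : point) : R :=
  sqrt ((fst a - fst b) ^ 2 + (snd a - snd b) ^ 2).

Definition weight (M : list (point * point)) : R :=
  fold_right (fun s acc => dist (fst s) (snd s) + acc) 0 M.

(* Fix a direction [u].  The projections onto [u] of the segments of a pairwise
   crossing matching [M] are pairwise intersecting intervals, so they share a
   point [t]; each segment [ab] of [M] then has projected length
   [|u.a - t| + |u.b - t|], so the projected length of [M] is
   [sum_(p in P) |u.p - t|], which bounds the projected length of any perfect
   matching on [P].

   Lengths are recovered from projected lengths by a discrete Crofton formula:
   if [(1,0) = c_0, c_1, ..., c_k = (-1,0)] are unit vectors of the upper half
   plane listed by decreasing abscissa and one of them is the direction of [v],
   then [sum_i |(c_(i+1) - c_i).v| = 2|v|].  Taking the [c_i] to be the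
   directions of all segments of both matchings and summing the projected
   inequality over the directions [c_(i+1) - c_i] gives [w(M') <= w(M)]. *)

From Stdlib Require Import Reals List Permutation Sorted Mergesort Orders Lra Psatz.
Import ListNotations.
Open Scope R_scope.

Definition sum_list {A} (f : A -> R) (l : list A) : R :=
  fold_right (fun x acc => f x + acc) 0 l.

Lemma sum_list_le {A} (f g : A -> R) l :
  (forall x, In x l -> f x <= g x) -> sum_list f l <= sum_list g l.
Proof.
  induction l as [|x l IH]; intros H; simpl; [lra|].
  apply Rplus_le_compat; [apply H; left; reflexivity|].
  apply IH; intros y Hy; apply H; right; exact Hy.
Qed.

Lemma sum_list_ext_in {A} (f g : A -> R) l :
  (forall x, In x l -> f x = g x) -> sum_list f l = sum_list g l.
Proof.
  intros H; apply Rle_antisym; apply sum_list_le; intros x Hx; rewrite H; auto; lra.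
Qed.

Lemma sum_list_zero {A} (l : list A) : sum_list (fun _ => 0) l = 0.
Proof. induction l as [|x l IH]; simpl; [reflexivity | rewrite IH; ring]. Qed.

Lemma sum_list_plus {A} (f g : A -> R) l :
  sum_list (fun x => f x + g x) l = sum_list f l + sum_list g l.
Proof. induction l as [|x l IH]; simpl; [ring|rewrite IH; ring]. Qed.

Lemma sum_list_scal {A} (c : R) (f : A -> R) l :
  sum_list (fun x => c * f x) l = c * sum_list f l.
Proof. induction l as [|x l IH]; simpl; [ring|rewrite IH; ring]. Qed.

Lemma sum_list_Permutation {A} (f : A -> R) l l' :
  Permutation l l' -> sum_list f l = sum_list f l'.
Proof. induction 1; simpl; congruence || ring. Qed.

Lemma sum_list_endpoints (f : point -> R) M :
  sum_list (fun s => f (fst s) + f (snd s)) M = sum_list f (endpoints M).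
Proof. induction M as [|[a b] M IH]; simpl; [reflexivity|rewrite IH; ring]. Qed.

Definition dot (u v : point) : R := fst u * fst v + snd u * snd v.

Definition seg_min (f : point -> R) (s : point * point) : R := Rmin (f (fst s)) (f (snd s)).
Definition seg_max (f : point -> R) (s : point * point) : R := Rmax (f (fst s)) (f (snd s)).

Lemma exists_argmax {A} (f : A -> R) x l :
  exists m, In m (x :: l) /\ forall y, In y (x :: l) -> f y <= f m.
Proof.
  revert x; induction l as [|y l IH]; intros x.
  - exists x; split; [left; reflexivity | intros y [<-|[]]; lra].
  - destruct (IH y) as [m [Hm Hmax]].
    destruct (Rle_dec (f x) (f m)).
    + exists m; split; [right; exact Hm|].
      intros z [<-|Hz]; auto.
    + exists x; split; [left; reflexivity|].
      intros z [<-|Hz]; [lra|]; specialize (Hmax z Hz); lra.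
Qed.

Lemma intervals_common_point {A} (lo hi : A -> R) l :
  (forall a b, In a l -> In b l -> lo a <= hi b) ->
  exists t, forall a, In a l -> lo a <= t <= hi a.
Proof.
  intros H; destruct l as [|x l].
  - exists 0; intros a [].
  - destruct (exists_argmax lo x l) as [m [Hm Hmax]].
    exists (lo m); intros a Ha; split; auto.
Qed.

Lemma segments_cross_seg_min_max w s1 s2 :
  segments_cross s1 s2 -> seg_min (dot w) s1 <= seg_max (dot w) s2.
Proof.
  intros [p [[t [Ht ->]] [u [Hu Hq]]]].
  assert (E : dot w ((1 - t) * fst (fst s1) + t * fst (snd s1),
                      (1 - t) * snd (fst s1) + t * snd (snd s1)) =
              (1 - u) * dot w (fst s2) + u * dot w (snd s2)).
  { rewrite Hq; unfold dot; simpl; ring. }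
  unfold seg_min, seg_max, dot, Rmin, Rmax in *; simpl in E.
  destruct (Rle_dec _ _), (Rle_dec _ _); nra.
Qed.

Lemma pairwise_crossing_seg_min_max w M s1 s2 :
  pairwise_crossing M -> In s1 M -> In s2 M -> seg_min (dot w) s1 <= seg_max (dot w) s2.
Proof.
  intros HM H1 H2.
  destruct (In_nth M s1 ((0,0),(0,0)) H1) as [i [Hi <-]].
  destruct (In_nth M s2 ((0,0),(0,0)) H2) as [j [Hj <-]].
  destruct (Nat.eq_dec i j) as [<-|Hij].
  - unfold seg_min, seg_max, Rmin, Rmax; destruct (Rle_dec _ _); lra.
  - apply segments_cross_seg_min_max, HM; assumption.
Qed.

(* Matched across a threshold [t], the length [|f a - f b|] of a pair is
   [|f a - t| + |f b - t|], a sum over points that no matching can exceed. *)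
Lemma straddling_matching_max (f : point -> R) t P M M' :
  perfect_matching P M -> perfect_matching P M' ->
  (forall s, In s M -> seg_min f s <= t <= seg_max f s) ->
  sum_list (fun s => Rabs (f (fst s) - f (snd s))) M' <=
  sum_list (fun s => Rabs (f (fst s) - f (snd s))) M.
Proof.
  intros HM HM' Ht.
  set (g p := Rabs (f p - t)).
  rewrite (sum_list_ext_in _ (fun s => g (fst s) + g (snd s)) M).
  2:{ intros s Hs; specialize (Ht s Hs); unfold seg_min, seg_max, g, Rmin, Rmax in *.
      destruct (Rle_dec _ _); unfold Rabs; repeat destruct (Rcase_abs _); lra. }
  rewrite sum_list_endpoints, (sum_list_Permutation _ _ _ HM).
  rewrite <- (sum_list_Permutation _ _ _ HM'), <- sum_list_endpoints.
  apply sum_list_le; intros s _; unfold g.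
  unfold Rabs; repeat destruct (Rcase_abs _); lra.
Qed.

Lemma pairwise_crossing_projection_max w P M M' :
  perfect_matching P M -> perfect_matching P M' -> pairwise_crossing M ->
  sum_list (fun s => Rabs (dot w (fst s) - dot w (snd s))) M' <=
  sum_list (fun s => Rabs (dot w (fst s) - dot w (snd s))) M.
Proof.
  intros HM HM' HC.
  destruct (intervals_common_point (seg_min (dot w)) (seg_max (dot w)) M) as [t Ht].
  { intros s1 s2; apply pairwise_crossing_seg_min_max; exact HC. }
  exact (straddling_matching_max (dot w) t P M M' HM HM' Ht).
Qed.

Fixpoint variation {A} (f : A -> R) (l : list A) : R :=
  match l with
  | x :: ((y :: _) as l') => Rabs (f y - f x) + variation f l'
  | _ => 0
  end.

Lemma variation_app {A} (f : A -> R) l1 z l2 :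
  variation f (l1 ++ z :: l2) = variation f (l1 ++ [z]) + variation f (z :: l2).
Proof.
  induction l1 as [|x [|y l1] IH]; simpl in *; [ring | ring |].
  rewrite IH; ring.
Qed.

Lemma variation_scal {A} (f g : A -> R) c l :
  (forall x, f x = c * g x) -> variation f l = Rabs c * variation g l.
Proof.
  intros H; induction l as [|x [|y l] IH]; simpl in *; [ring | ring |].
  rewrite IH, !H.
  replace (c * g y - c * g x) with (c * (g y - g x)) by ring.
  rewrite Rabs_mult; ring.
Qed.

Lemma last_cons_default {A} (x y : A) l : last (y :: l) x = last l y.
Proof.
  revert x y; induction l as [|a l IH]; intros x y; [reflexivity|].
  change (last (a :: l) x = last (a :: l) y); rewrite !IH; reflexivity.
Qed.

Lemma variation_nondecreasing {A} (f : A -> R) x l :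
  Sorted (fun a b => f a <= f b) (x :: l) -> variation f (x :: l) = f (last l x) - f x.
Proof.
  revert x; induction l as [|y l IH]; intros x H; [simpl; ring|].
  apply Sorted_inv in H as [Hs Hd]; apply HdRel_inv in Hd.
  change (variation f (x :: y :: l)) with (Rabs (f y - f x) + variation f (y :: l)).
  rewrite last_cons_default.
  rewrite (IH y Hs), Rabs_right by lra; ring.
Qed.

Lemma variation_nonincreasing {A} (f : A -> R) x l :
  Sorted (fun a b => f b <= f a) (x :: l) -> variation f (x :: l) = f x - f (last l x).
Proof.
  revert x; induction l as [|y l IH]; intros x H; [simpl; ring|].
  apply Sorted_inv in H as [Hs Hd]; apply HdRel_inv in Hd.
  change (variation f (x :: y :: l)) with (Rabs (f y - f x) + variation f (y :: l)).
  rewrite last_cons_default.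
  rewrite (IH y Hs), Rabs_left1 by lra; ring.
Qed.

Lemma sum_variation_le {A B} (g : A -> B -> R) (L L' : list A) (C : list B) :
  (forall x y, sum_list (fun s => Rabs (g s y - g s x)) L' <=
               sum_list (fun s => Rabs (g s y - g s x)) L) ->
  sum_list (fun s => variation (g s) C) L' <= sum_list (fun s => variation (g s) C) L.
Proof.
  intros H; induction C as [|x [|y C] IH]; simpl variation.
  - rewrite !sum_list_zero; lra.
  - rewrite !sum_list_zero; lra.
  - rewrite !sum_list_plus; apply Rplus_le_compat; [apply H | exact IH].
Qed.

Lemma StronglySorted_app_iff {A} (Rel : A -> A -> Prop) l1 l2 :
  StronglySorted Rel (l1 ++ l2) <->
  StronglySorted Rel l1 /\ StronglySorted Rel l2 /\ Forall (fun a => Forall (Rel a) l2) l1.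
Proof.
  induction l1 as [|a l1 IH]; simpl.
  - split; [intros H; repeat split; auto; constructor | tauto].
  - split.
    + intros [Hs Hf]%StronglySorted_inv; apply Forall_app in Hf as [Hf1 Hf2].
      apply IH in Hs as (Hs1 & Hs2 & Hx).
      repeat split; auto; constructor; auto.
    + intros (Hs1 & Hs2 & Hx); apply StronglySorted_inv in Hs1 as [Hs1 Hf1].
      apply Forall_cons_iff in Hx as [Ha Hx].
      constructor; [apply IH; auto | apply Forall_app; auto].
Qed.

Lemma Sorted_impl_in {A} (P : A -> Prop) (Rel Rel' : A -> A -> Prop) l :
  (forall a b, P a -> P b -> Rel a b -> Rel' a b) -> Forall P l ->
  Sorted Rel l -> Sorted Rel' l.
Proof.
  intros H HP Hs; induction Hs as [|a l Hs IH Hd]; constructor.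
  - apply Forall_cons_iff in HP as [_ HP]; auto.
  - apply Forall_cons_iff in HP as [Ha HP].
    destruct Hd as [|b l' Hab]; constructor.
    apply Forall_cons_iff in HP as [Hb _]; auto.
Qed.

Definition upper_unit (c : point) : Prop := fst c ^ 2 + snd c ^ 2 = 1 /\ 0 <= snd c.

Definition cross (u v : point) : R := fst u * snd v - snd u * fst v.

(* For unit [x], [z]: [cross x z * (snd x + snd z) = (fst x - fst z) * |x + z|^2 / 2]. *)
Lemma cross_upper_unit_nonneg x z :
  upper_unit x -> upper_unit z -> fst z <= fst x -> 0 <= cross x z.
Proof.
  destruct x as [x1 x2], z as [z1 z2]; unfold upper_unit, cross; cbn [fst snd].
  intros [Hx Hx2] [Hz Hz2] H.
  destruct (Rle_lt_or_eq_dec 0 (x2 + z2)) as [Hp|H0]; [lra| |].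
  - assert (E : (x1 * z2 - x2 * z1) * (x2 + z2) =
                (x1 - z1) * (x1 * z1 + x2 * z2) + x1 * (z1 ^ 2 + z2 ^ 2) - z1 * (x1 ^ 2 + x2 ^ 2))
      by ring.
    rewrite Hx, Hz in E.
    assert (0 <= (x1 + z1) ^ 2 + (x2 + z2) ^ 2)
      by (apply Rplus_le_le_0_compat; apply pow2_ge_0).
    assert (0 <= (x1 * z2 - x2 * z1) * (x2 + z2)) by (rewrite E; nra).
    nra.
  - replace x2 with 0 by lra; replace z2 with 0 by lra; lra.
Qed.

(* For unit [x], [y]: [(z.y - z.x) * (snd x + snd y) = (fst x - fst y) * (cross x z + cross y z)]. *)
Lemma dot_upper_unit_rising x y z :
  upper_unit x -> upper_unit y -> upper_unit z ->
  fst z <= fst y -> fst y <= fst x -> dot z x <= dot z y.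
Proof.
  intros Ux Uy Uz H1 H2.
  pose proof (cross_upper_unit_nonneg x z Ux Uz ltac:(lra)) as Cx.
  pose proof (cross_upper_unit_nonneg y z Uy Uz H1) as Cy.
  destruct x as [x1 x2], y as [y1 y2], z as [z1 z2].
  unfold upper_unit, cross, dot in *; cbn [fst snd] in *.
  destruct Ux as [Hx Hx2], Uy as [Hy Hy2], Uz as [Hz Hz2].
  destruct (Rle_lt_or_eq_dec 0 (x2 + y2)) as [Hp|H0]; [lra| |].
  - assert (E : (z1 * y1 + z2 * y2 - (z1 * x1 + z2 * x2)) * (x2 + y2) =
                (x1 - y1) * ((x1 * z2 - x2 * z1) + (y1 * z2 - y2 * z1)) +
                z2 * ((y1 ^ 2 + y2 ^ 2) - (x1 ^ 2 + x2 ^ 2))) by ring.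
    rewrite Hx, Hy in E.
    assert (0 <= (z1 * y1 + z2 * y2 - (z1 * x1 + z2 * x2)) * (x2 + y2)) by (rewrite E; nra).
    nra.
  - replace x2 with 0 in * by lra; replace y2 with 0 in * by lra; nra.
Qed.

Definition mirror (c : point) : point := (- fst c, snd c).

Lemma dot_upper_unit_falling x y z :
  upper_unit x -> upper_unit y -> upper_unit z ->
  fst y <= fst x -> fst x <= fst z -> dot z y <= dot z x.
Proof.
  intros Ux Uy Uz H1 H2.
  assert (Umirror : forall c, upper_unit c -> upper_unit (mirror c)).
  { intros c [Hc Hc2]; split; [rewrite <- Hc; simpl; ring | exact Hc2]. }
  assert (Hdot : forall a b, dot (mirror a) (mirror b) = dot a b).
  { intros a b; unfold dot; simpl; ring. }
  rewrite <- (Hdot z y), <- (Hdot z x).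
  apply dot_upper_unit_rising; auto; simpl; lra.
Qed.

Definition norm (v : point) : R := sqrt (fst v ^ 2 + snd v ^ 2).

Definition scale (c : R) (v : point) : point := (c * fst v, c * snd v).

Definition upper_direction (v : point) : point :=
  let c := if Rle_dec 0 (snd v) then norm v else - norm v in
  if Req_EM_T c 0 then (1, 0) else scale (/ c) v.

Lemma upper_direction_spec v :
  upper_unit (upper_direction v) /\
  exists c, Rabs c = norm v /\ v = scale c (upper_direction v).
Proof.
  assert (Hn : norm v ^ 2 = fst v ^ 2 + snd v ^ 2)
    by (apply pow2_sqrt; nra).
  assert (Hn0 : 0 <= norm v) by apply sqrt_pos.
  unfold upper_direction.
  set (c := if Rle_dec 0 (snd v) then norm v else - norm v).
  assert (Hc : c ^ 2 = norm v ^ 2 /\ Rabs c = norm v /\ 0 <= snd v * c).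
  { unfold c; destruct (Rle_dec 0 (snd v)).
    - split; [|split]; [reflexivity | apply Rabs_right; lra | nra].
    - split; [|split]; [ring | rewrite Rabs_Ropp; apply Rabs_right; lra | nra]. }
  destruct Hc as (Hc2 & Habs & Hup).
  destruct v as [v1 v2]; unfold upper_unit, scale in *; cbn [fst snd] in *.
  destruct (Req_EM_T c 0) as [H0|H0]; cbn [fst snd].
  - assert (v1 = 0 /\ v2 = 0) as [-> ->] by (rewrite H0 in Hc2; nra).
    split; [split; lra|]; exists 0; split; [rewrite Rabs_R0; nra | f_equal; ring].
  - split.
    + split.
      * field_simplify; [rewrite <- Hn, <- Hc2; field |]; auto.
      * replace (/ c * v2) with (v2 * c * / c ^ 2) by (field; exact H0).
        apply Rmult_le_pos; [exact Hup |].
        apply Rlt_le, Rinv_0_lt_compat; rewrite <- Rsqr_pow2; exact (Rsqr_pos_lt c H0).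
    + exists c; split; [exact Habs | f_equal; field; exact H0].
Qed.

Definition x_ge (a b : point) : Prop := fst b <= fst a.

Lemma upper_unit_fst_bounds c : upper_unit c -> -1 <= fst c <= 1.
Proof. intros [H _]; split; nra. Qed.

Lemma dot_upper_unit_self z : upper_unit z -> dot z z = 1.
Proof. intros [H _]; rewrite <- H; unfold dot; ring. Qed.

Lemma variation_dot_rising z x l :
  upper_unit z -> Forall upper_unit (x :: l) -> StronglySorted x_ge (x :: l ++ [z]) ->
  variation (dot z) (x :: l ++ [z]) = 1 - dot z x.
Proof.
  intros Uz Ul Hs.
  assert (Hz : Forall (fun a => x_ge a z) (x :: l)).
  { apply (StronglySorted_app_iff x_ge (x :: l) [z]) in Hs as (_ & _ & Hz).
    eapply Forall_impl; [|exact Hz]; intros a Ha; inversion Ha; assumption. }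
  rewrite variation_nondecreasing, last_last, dot_upper_unit_self; [reflexivity | exact Uz |].
  apply (Sorted_impl_in (fun c => upper_unit c /\ fst z <= fst c) x_ge).
  - intros a b [Ua Ha] [Ub Hb] Hab; apply dot_upper_unit_rising; auto.
  - rewrite app_comm_cons; apply Forall_app; split.
    + rewrite Forall_forall in *; intros a Ha; split; auto; apply Hz, Ha.
    + constructor; [split; [exact Uz | lra] | constructor].
  - apply StronglySorted_Sorted, Hs.
Qed.

Lemma variation_dot_falling z l :
  upper_unit z -> Forall upper_unit l -> StronglySorted x_ge (z :: l) ->
  variation (dot z) (z :: l) = 1 - dot z (last l z).
Proof.
  intros Uz Ul Hs.
  rewrite variation_nonincreasing, dot_upper_unit_self; [reflexivity | exact Uz |].
  apply (Sorted_impl_in (fun c => upper_unit c /\ fst c <= fst z) x_ge).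
  - intros a b [Ua Ha] [Ub Hb] Hab; apply dot_upper_unit_falling; auto.
  - apply StronglySorted_inv in Hs as [_ Hz].
    constructor; [split; [exact Uz | lra] |].
    rewrite Forall_forall in *; intros a Ha; split; auto; apply Hz, Ha.
  - apply StronglySorted_Sorted, Hs.
Qed.

Definition semicircle_chain (S : list point) : list point := (1, 0) :: S ++ [(-1, 0)].

Lemma semicircle_chain_sorted S :
  Forall upper_unit S -> StronglySorted x_ge S -> StronglySorted x_ge (semicircle_chain S).
Proof.
  intros US HS; rewrite Forall_forall in US.
  constructor.
  - apply StronglySorted_app_iff; split; [exact HS | split; [repeat constructor |]].
    apply Forall_forall; intros a Ha; constructor; [|constructor].
    exact (proj1 (upper_unit_fst_bounds a (US a Ha))).
  - apply Forall_forall; intros a [Ha | [<- | []]]%in_app_or; unfold x_ge; simpl; [|lra].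
    exact (proj2 (upper_unit_fst_bounds a (US a Ha))).
Qed.

(* [c |-> z.c] increases from [(1, 0)] to [z] and then decreases to [(-1, 0)], so the
   variation is [(1 - fst z) + (1 + fst z)]. *)
Lemma variation_dot_semicircle_chain S z :
  Forall upper_unit S -> StronglySorted x_ge S -> In z S ->
  variation (dot z) (semicircle_chain S) = 2.
Proof.
  intros US HS Hz.
  pose proof (semicircle_chain_sorted S US HS) as HC.
  assert (Uz : upper_unit z) by (rewrite Forall_forall in US; auto).
  destruct (in_split z S Hz) as (S1 & S2 & ->).
  apply Forall_app in US as [US1 US2]; apply Forall_cons_iff in US2 as [_ US2].
  unfold semicircle_chain in *; rewrite <- app_assoc in *; simpl app in HC |- *.
  assert (Hrise : StronglySorted x_ge ((1, 0) :: S1 ++ [z])).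
  { apply (StronglySorted_app_iff x_ge _ (S2 ++ [(-1, 0)])).
    simpl; rewrite <- app_assoc; exact HC. }
  assert (Hfall : StronglySorted x_ge (z :: S2 ++ [(-1, 0)])).
  { apply (StronglySorted_app_iff x_ge ((1, 0) :: S1)), HC. }
  change ((1, 0) :: S1 ++ z :: S2 ++ [(-1, 0)])
    with (((1, 0) :: S1) ++ z :: S2 ++ [(-1, 0)]).
  rewrite variation_app, <- app_comm_cons.
  rewrite variation_dot_rising, variation_dot_falling, last_last; auto.
  - unfold dot; simpl; ring.
  - apply Forall_app; split; [exact US2 |].
    constructor; [split; cbn [fst snd]; [ring | lra] | constructor].
  - constructor; [split; cbn [fst snd]; [ring | lra] | exact US1].
Qed.

Lemma variation_dot_semicircle_chain_norm S v :
  Forall upper_unit S -> StronglySorted x_ge S -> In (upper_direction v) S ->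
  variation (dot v) (semicircle_chain S) = 2 * norm v.
Proof.
  intros US HS Hv.
  destruct (upper_direction_spec v) as [_ [c [Hc Hvc]]].
  rewrite (variation_scal _ (dot (upper_direction v)) c).
  - rewrite variation_dot_semicircle_chain, Hc by assumption; ring.
  - intros p; rewrite Hvc at 1; unfold dot, scale; simpl; ring.
Qed.

Module XDecreasing <: TotalLeBool'.
  Definition t := point.
  Definition leb (a b : point) : bool := if Rle_dec (fst b) (fst a) then true else false.
  Lemma leb_total a b : leb a b = true \/ leb b a = true.
  Proof.
    unfold leb; destruct (Rle_dec (fst b) (fst a)), (Rle_dec (fst a) (fst b)); auto; lra.
  Qed.
End XDecreasing.

Module XDecreasingSort := Sort XDecreasing.

Lemma exists_x_decreasing_permutation (l : list point) :
  exists S, Permutation l S /\ StronglySorted x_ge S.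
Proof.
  exists (XDecreasingSort.sort l); split; [apply XDecreasingSort.Permuted_sort |].
  apply Sorted_StronglySorted; [intros a b c; unfold x_ge; lra |].
  apply (Sorted_impl_in (fun _ => True) (fun a b => XDecreasing.leb a b = true)).
  - intros a b _ _; unfold XDecreasing.leb, x_ge; destruct (Rle_dec _ _); easy.
  - apply Forall_forall; easy.
  - apply XDecreasingSort.Sorted_sort.
Qed.

Definition seg_vec (s : point * point) : point :=
  (fst (fst s) - fst (snd s), snd (fst s) - snd (snd s)).

Lemma weight_semicircle_chain S L :
  Forall upper_unit S -> StronglySorted x_ge S ->
  (forall s, In s L -> In (upper_direction (seg_vec s)) S) ->
  2 * weight L = sum_list (fun s => variation (dot (seg_vec s)) (semicircle_chain S)) L.
Proof.
  intros US HS HL.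
  change (weight L) with (sum_list (fun s => dist (fst s) (snd s)) L).
  rewrite <- sum_list_scal; apply sum_list_ext_in; intros s Hs.
  rewrite variation_dot_semicircle_chain_norm by auto; reflexivity.
Qed.

Lemma pairwise_crossing_variation_max P M M' C :
  perfect_matching P M -> perfect_matching P M' -> pairwise_crossing M ->
  sum_list (fun s => variation (dot (seg_vec s)) C) M' <=
  sum_list (fun s => variation (dot (seg_vec s)) C) M.
Proof.
  intros HM HM' HC; apply sum_variation_le; intros x y.
  set (w := (fst y - fst x, snd y - snd x)).
  assert (E : forall L, sum_list (fun s => Rabs (dot (seg_vec s) y - dot (seg_vec s) x)) L =
                        sum_list (fun s => Rabs (dot w (fst s) - dot w (snd s))) L).
  { intros L; apply sum_list_ext_in; intros s _; f_equal; unfold dot, seg_vec, w; simpl; ring. }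
  rewrite !E; apply (pairwise_crossing_projection_max w P); assumption.
Qed.

Theorem theorem10 (P : list point) (M : list (point * point)) :
  NoDup P ->
  general_position P ->
  Nat.Even (length P) ->
  perfect_matching P M ->
  pairwise_crossing M ->
  forall M' : list (point * point), perfect_matching P M' -> weight M' <= weight M.
Proof.
  intros _ _ _ HM HC M' HM'.
  set (directions := map (fun s => upper_direction (seg_vec s)) (M ++ M')).
  destruct (exists_x_decreasing_permutation directions) as [S [Hperm HS]].
  assert (US : Forall upper_unit S).
  { apply (Permutation_Forall Hperm), Forall_forall; intros c Hc.
    apply in_map_iff in Hc as [s [<- _]]; apply upper_direction_spec. }
  assert (HdS : forall s, In s (M ++ M') -> In (upper_direction (seg_vec s)) S).
  { intros s Hs; apply (Permutation_in _ Hperm), in_map_iff; exists s; auto. }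
  apply (Rmult_le_reg_l 2); [lra |].
  rewrite !(weight_semicircle_chain S) by auto using in_or_app.
  apply (pairwise_crossing_variation_max P); assumption.
Qed.
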